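(* Let $M$ be an abelian group of odd order with exponent greater than $2$. Then $\mathrm{Aut}(L_M)\cong S_3\times\mathrm{Aut}(M)$ and $\mathrm{Half}(L_M)\cong C_2\times S_3\times\mathrm{Aut}(M)$.
   Context: Let $K=\{1,a,b,c\}$ be the Klein four-group. Set $L_M=K\times M$ with the operation $(A,x)*(B,y)=(AB,xy)$ if $B=1$, and $(A,x)*(B,y)=(AB,x^{-1}y)$ if $B\neq 1$. $\mathrm{Half}(L_M)$ denotes the group of half-automorphisms of $L_M$, i.e. bijections $f$ with $f(XY)\in\{f(X)f(Y),f(Y)f(X)\}$ for all $X,Y$. $S_3$ is the symmetric group on three letters and $C_2$ the cyclic group of order $2$. *)

From HB Require Import structures.
From mathcomp Require Import all_boot all_algebra all_fingroup all_solvable.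
Set Implicit Arguments. Unset Strict Implicit. Unset Printing Implicit Defensive.

Local Open Scope group_scope.

Definition Klein : finGroupType := ('Z_2 * 'Z_2)%type.

Definition LM_mul (gT : finGroupType) (X Y : Klein * gT) : Klein * gT :=
  let: (A, x) := X in let: (B, y) := Y in
  if B == 1 then (A * B, x * y) else (A * B, x^-1 * y).

Definition LM_Aut (gT : finGroupType) : {set {perm (Klein * gT)}} :=
  [set f : {perm (Klein * gT)} |
     [forall X, forall Y, f (LM_mul X Y) == LM_mul (f X) (f Y)]].

Definition LM_Half (gT : finGroupType) : {set {perm (Klein * gT)}} :=
  [set f : {perm (Klein * gT)} |
     [forall X, forall Y, (f (LM_mul X Y) == LM_mul (f X) (f Y))
                       || (f (LM_mul X Y) == LM_mul (f Y) (f X))]].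

(* Squares of L_M lie in {1} x M, and since M has odd order every (1, x) is a
   square; so a half-automorphism f preserves {1} x M, where it acts by an
   automorphism alpha of M, and f (A, x) = (sigma A, beta A x) with sigma a
   permutation of K fixing 1, i.e. an element of S_3.  Evaluating f on the
   products (A,1)(1,x), (A,x)(A,y) and (A,1)(B,m) shows that on each nontrivial
   coset beta A is either alpha or alpha followed by inversion, with the same
   choice on all three cosets: mixed choices would produce an element of M equal
   to its own inverse other than 1, which odd order forbids.  The first choice
   gives exactly the automorphisms, one for each pair in S_3 x Aut(M); the second
   gives their products with the involution inverting M on the nontrivial
   cosets, a half-automorphism commuting with them that is not an automorphism. *)

From mathcomp Require Import all_boot all_algebra all_fingroup all_solvable.
Set Implicit Arguments. Unset Strict Implicit. Unset Printing Implicit Defensive.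
Local Open Scope group_scope.

Lemma Z2_cases (z : 'Z_2) : z = 1 \/ z = Zp1.
Proof. by case: z => [[|[|n]] lt_n2] //; [left | right]; apply: val_inj. Qed.

Lemma klein_cases (A : Klein) :
  [\/ A = 1, A = (Zp1, 1), A = (1, Zp1) | A = (Zp1, Zp1)].
Proof.
case: A => a b; case: (Z2_cases a) => ->; case: (Z2_cases b) => ->;
  by [apply: Or41 | apply: Or43 | apply: Or42 | apply: Or44].
Qed.

Lemma klein_mulgg (A : Klein) : A * A = 1.
Proof. by apply/eqP; case: (klein_cases A) => ->. Qed.

Lemma kleinV (A : Klein) : A^-1 = A.
Proof. by apply/eqP; rewrite eq_invg_mul klein_mulgg. Qed.

Lemma kleinC (A B : Klein) : A * B = B * A.
Proof. by apply/eqP; case: (klein_cases A) => ->; case: (klein_cases B) => ->. Qed.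

Lemma klein_mul_eq1 (A B : Klein) : (A * B == 1) = (A == B).
Proof. by rewrite -eq_invg_mul kleinV. Qed.

Lemma klein_third (A B C : Klein) : A != 1 -> B != 1 -> C != 1 ->
  A != B -> C != A -> C != B -> C = A * B.
Proof.
move=> nt_A nt_B nt_C neq_AB neq_CA neq_CB; apply/eqP.
move: nt_A nt_B nt_C neq_AB neq_CA neq_CB.
by case: (klein_cases A) => ->; case: (klein_cases B) => ->; case: (klein_cases C) => ->.
Qed.

Lemma klein_injm (g : Klein -> Klein) : injective g -> g 1 = 1 -> {morph g : A B / A * B}.
Proof.
move=> g_inj g1 A B.
have g_neq1 C : C != 1 -> g C != 1 by rewrite -[in g C != _]g1 (inj_eq g_inj).
have [-> | nt_A] := eqVneq A 1; first by rewrite g1 !mul1g.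
have [-> | nt_B] := eqVneq B 1; first by rewrite g1 !mulg1.
have [<- | neq_AB] := eqVneq A B; first by rewrite !klein_mulgg.
apply: klein_third; rewrite ?g_neq1 ?klein_mul_eq1 ?(inj_eq g_inj) //.
- by rewrite -{2}[A]mulg1 (inj_eq (mulgI A)).
- by rewrite -{2}[B]mul1g (inj_eq (mulIg B)).
Qed.

Lemma klein_factor (C : Klein) : C != 1 -> exists A B, [/\ A != 1, B != 1 & A * B = C].
Proof.
case: (klein_cases C) => -> // _.
- by exists (1, Zp1), (Zp1, Zp1); split => //; apply/eqP.
- by exists (Zp1, 1), (Zp1, Zp1); split => //; apply/eqP.
- by exists (Zp1, 1), (1, Zp1); split => //; apply/eqP.
Qed.

(* S_3 acts on K by permuting its three involutions, labelled by 'I_3. *)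
Definition klein_of_ord (i : 'I_3) : Klein :=
  if i == 0%N :> nat then (Zp1, 1) else if i == 1%N :> nat then (1, Zp1) else (Zp1, Zp1).

Definition ord_of_klein (A : Klein) : 'I_3 :=
  inord (if A == (Zp1, 1) then 0%N else if A == (1, Zp1) then 1%N else 2%N).

Lemma klein_of_ord_neq1 i : klein_of_ord i != 1.
Proof. by case: i => [[|[|[|n]]] lt_i3]. Qed.

Lemma klein_of_ordK : cancel klein_of_ord ord_of_klein.
Proof. by case=> [[|[|[|n]]] lt_i3] //; apply: val_inj; rewrite /= inordK. Qed.

Lemma klein_of_ord_inj : injective klein_of_ord.
Proof. exact: can_inj klein_of_ordK. Qed.

Lemma ord_of_kleinK A : A != 1 -> klein_of_ord (ord_of_klein A) = A.
Proof. by case: (klein_cases A) => -> // _; rewrite /klein_of_ord inordK. Qed.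

Definition klein_aut (s : {perm 'I_3}) (A : Klein) : Klein :=
  if A == 1 then 1 else klein_of_ord (s (ord_of_klein A)).

Lemma klein_aut1 s : klein_aut s 1 = 1.
Proof. by rewrite /klein_aut eqxx. Qed.

Lemma klein_aut_eq1 s A : (klein_aut s A == 1) = (A == 1).
Proof.
rewrite /klein_aut; have [// | nt_A] := eqVneq A 1.
by rewrite (negPf (klein_of_ord_neq1 _)).
Qed.

Lemma klein_aut_inj s : injective (klein_aut s).
Proof.
move=> A B; rewrite /klein_aut.
have [-> | nt_A] := eqVneq A 1; have [-> | nt_B] := eqVneq B 1 => //.
- by move/esym/eqP; rewrite (negPf (klein_of_ord_neq1 _)).
- by move/eqP; rewrite (negPf (klein_of_ord_neq1 _)).
by move/klein_of_ord_inj/perm_inj/(congr1 klein_of_ord); rewrite !ord_of_kleinK.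
Qed.

Lemma klein_autM s : {morph klein_aut s : A B / A * B}.
Proof. move=> A B; exact: klein_injm (@klein_aut_inj s) (klein_aut1 s) A B. Qed.

Lemma klein_aut_permM s t A : klein_aut (s * t) A = klein_aut t (klein_aut s A).
Proof.
rewrite /klein_aut; have [// | nt_A] := eqVneq A 1.
by rewrite (negPf (klein_of_ord_neq1 _)) klein_of_ordK permM.
Qed.

Lemma klein_aut_perm_inj s t : klein_aut s =1 klein_aut t -> s = t.
Proof.
move=> eq_st; apply/permP => i; apply: klein_of_ord_inj.
by have := eq_st (klein_of_ord i); rewrite /klein_aut (negPf (klein_of_ord_neq1 i)) klein_of_ordK.
Qed.

Lemma klein_autP (g : Klein -> Klein) : injective g -> g 1 = 1 ->
  exists s, klein_aut s =1 g.
Proof.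
move=> g_inj g1; have g_neq1 A : A != 1 -> g A != 1 by rewrite -[in g A != _]g1 (inj_eq g_inj).
have gK_inj : injective (fun i => ord_of_klein (g (klein_of_ord i))).
  move=> i j /(congr1 klein_of_ord); rewrite !ord_of_kleinK ?g_neq1 ?klein_of_ord_neq1 //.
  by move/g_inj/klein_of_ord_inj.
exists (perm gK_inj) => A; rewrite /klein_aut permE.
have [-> | nt_A] := eqVneq A 1; first by rewrite g1.
by rewrite !ord_of_kleinK ?g_neq1.
Qed.

Lemma exists_nontrivial (gT : finGroupType) : 1 < exponent [set: gT] -> exists m : gT, m != 1.
Proof.
move=> exp_gt1; apply/existsP; apply: contraLR exp_gt1 => /existsPn all1.
rewrite -leqNgt dvdn_leq //; apply/exponentP => x _.
by rewrite expg1; apply/eqP/negbNE.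
Qed.

Section OddOrder.
Variable gT : finGroupType.
Hypothesis oddG : odd #|[set: gT]|.

Lemma odd_mulgg_eq1 (x : gT) : x * x = 1 -> x = 1.
Proof.
move=> xx1; apply/eqP; rewrite -order_eq1 -dvdn1.
have /eqP <- : coprime 2 #|[set: gT]| by rewrite coprime2n oddG.
by rewrite dvdn_gcd order_dvdn expgS expg1 xx1 eqxx order_dvdG ?inE.
Qed.

Lemma odd_invg_fix (x : gT) : x^-1 = x -> x = 1.
Proof. by move=> xV; apply: odd_mulgg_eq1; rewrite -{1}xV mulVg. Qed.

Lemma odd_sqrtg (x : gT) : exists y, y * y = x.
Proof.
exists (x ^+ (#|[set: gT]|.+1)./2).
by rewrite -expgnDr addnn halfK /= oddG subn0 expgS expg_cardG ?inE ?mulg1.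
Qed.

End OddOrder.

Section AbelianGroup.
Variable gT : finGroupType.
Hypothesis abelG : abelian [set: gT].

Lemma abelian_mulgC (x y : gT) : x * y = y * x.
Proof. exact: (centsP abelG) x (in_setT x) y (in_setT y). Qed.

End AbelianGroup.

Section AutSetT.
Variables (gT : finGroupType) (a : {perm gT}).
Hypothesis autGa : a \in Aut [set: gT].

Lemma autT_morphM : {morph a : x y / x * y}.
Proof. by move=> x y; rewrite -(autmE autGa) morphM ?inE. Qed.

Lemma autT_morphV : {morph a : x / x^-1}.
Proof. by move=> x; rewrite -(autmE autGa) morphV ?inE. Qed.

Lemma autT_morph1 : a 1 = 1.
Proof. by rewrite -(autmE autGa) morph1. Qed.

End AutSetT.

Section LoopLM.
Variable gT : finGroupType.
Implicit Types (A B : Klein) (x y : gT) (X Y : Klein * gT) (f : {perm Klein * gT}).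

Lemma LM_mulE A B x y :
  LM_mul (A, x) (B, y) = if B == 1 then (A * B, x * y) else (A * B, x^-1 * y).
Proof. by []. Qed.

Lemma LM_mul_fst X Y : (LM_mul X Y).1 = X.1 * Y.1.
Proof. by case: X => A x; case: Y => B y; rewrite LM_mulE; case: ifP. Qed.

Lemma LM_mul1r A x y : LM_mul (A, x) (1, y) = (A, x * y).
Proof. by rewrite LM_mulE eqxx mulg1. Qed.

Lemma LM_mulNr A B x y : B != 1 -> LM_mul (A, x) (B, y) = (A * B, x^-1 * y).
Proof. by rewrite LM_mulE => /negPf ->. Qed.

Definition half_morph (f : Klein * gT -> Klein * gT) :=
  forall X Y, f (LM_mul X Y) = LM_mul (f X) (f Y) \/ f (LM_mul X Y) = LM_mul (f Y) (f X).

Lemma LM_AutP f : reflect {morph f : X Y / LM_mul X Y} (f \in LM_Aut gT).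
Proof. by rewrite inE; apply: (iffP 'forall_'forall_eqP). Qed.

Lemma LM_HalfP f : reflect (half_morph f) (f \in LM_Half gT).
Proof.
rewrite inE; apply: (iffP forallP) => [fhalf X Y | fhalf X].
  by move: (fhalf X) => /forallP/(_ Y)/orP[]/eqP; [left | right].
by apply/forallP => Y; case: (fhalf X Y) => ->; rewrite eqxx ?orbT.
Qed.

Lemma LM_Aut_sub_Half : LM_Aut gT \subset LM_Half gT.
Proof. by apply/subsetP => f /LM_AutP fM; apply/LM_HalfP => X Y; left. Qed.

Lemma LM_Half_mul f g : f \in LM_Half gT -> g \in LM_Half gT -> f * g \in LM_Half gT.
Proof.
move=> /LM_HalfP fhalf /LM_HalfP ghalf; apply/LM_HalfP => X Y; rewrite !permM.
by case: (fhalf X Y) => ->; [case: (ghalf (f X) (f Y)) | case: (ghalf (f Y) (f X))] => ->;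
  [left | right | right | left].
Qed.

End LoopLM.

Section Constructions.
Variable gT : finGroupType.
Implicit Types (A : Klein) (x : gT) (p q : {perm 'I_3} * {perm gT}).

Definition LM_autp_fun p (X : Klein * gT) := (klein_aut p.1 X.1, p.2 X.2).

Lemma LM_autp_fun_inj p : injective (LM_autp_fun p).
Proof. by move=> [A x] [B y] [/klein_aut_inj -> /perm_inj ->]. Qed.

Definition LM_autp p : {perm Klein * gT} := perm (@LM_autp_fun_inj p).

Lemma LM_autpE p A x : LM_autp p (A, x) = (klein_aut p.1 A, p.2 x).
Proof. by rewrite permE. Qed.

Lemma LM_autpM p q : LM_autp (p * q) = LM_autp p * LM_autp q.
Proof. by apply/permP => -[A x]; rewrite permM !LM_autpE klein_aut_permM permM. Qed.

Lemma LM_autp_inj : injective LM_autp.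
Proof.
move=> [s a] [t b] eq_st; have eq_at X := congr1 (fun g : {perm Klein * gT} => g X) eq_st.
congr (_, _); last by apply/permP => x; move: (eq_at (1, x)); rewrite !LM_autpE => /(congr1 snd).
by apply: klein_aut_perm_inj => A; move: (eq_at (A, 1)); rewrite !LM_autpE => /(congr1 fst).
Qed.

Lemma LM_autp_Aut p : p.2 \in Aut [set: gT] -> LM_autp p \in LM_Aut gT.
Proof.
move=> autGa; apply/LM_AutP => -[A x] [B y].
rewrite !LM_autpE !LM_mulE klein_aut_eq1.
by case: ifP => _; rewrite LM_autpE klein_autM autT_morphM ?autT_morphV.
Qed.

Definition LM_twist_fun (X : Klein * gT) := (X.1, if X.1 == 1 then X.2 else X.2^-1).

Lemma LM_twist_funK : involutive LM_twist_fun.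
Proof. by move=> [A x]; rewrite /LM_twist_fun /=; case: (A == 1); rewrite /= ?invgK. Qed.

Definition LM_twist : {perm Klein * gT} := perm (inv_inj LM_twist_funK).

Lemma LM_twistE A x : LM_twist (A, x) = (A, if A == 1 then x else x^-1).
Proof. by rewrite permE. Qed.

Lemma LM_twist_sqr : LM_twist * LM_twist = 1.
Proof. by apply/permP => X; rewrite permM perm1 !permE LM_twist_funK. Qed.

Lemma LM_twist_autpC p : p.2 \in Aut [set: gT] -> commute (LM_autp p) LM_twist.
Proof.
move=> autGa; apply/permP => -[A x].
by rewrite !permM LM_twistE !LM_autpE LM_twistE klein_aut_eq1; case: ifP; rewrite ?autT_morphV.
Qed.

Lemma LM_twist_Half : abelian [set: gT] -> LM_twist \in LM_Half gT.
Proof.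
move=> abelG; apply/LM_HalfP => -[A x] [B y].
have [-> | nt_B] := eqVneq B 1.
  rewrite LM_mul1r !LM_twistE eqxx; have [_ | nt_A] := eqVneq A 1.
    by left; rewrite LM_mul1r.
  by right; rewrite LM_mulNr // mul1g invMg.
have [-> | nt_A] := eqVneq A 1.
  rewrite LM_mulNr // !LM_twistE mul1g eqxx (negPf nt_B).
  by right; rewrite LM_mul1r invMg invgK.
have [<- | neq_AB] := eqVneq A B.
  rewrite LM_mulNr // klein_mulgg !LM_twistE eqxx (negPf nt_A) !LM_mulNr // klein_mulgg.
  by right; rewrite invgK (abelian_mulgC abelG).
rewrite LM_mulNr // !LM_twistE klein_mul_eq1 (negPf nt_A) (negPf nt_B) (negPf neq_AB).
by left; rewrite LM_mulNr // invMg !invgK (abelian_mulgC abelG).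
Qed.

End Constructions.

Section HalfAutomorphism.
Variables (gT : finGroupType) (m : gT) (f : {perm Klein * gT}).
Hypotheses (abelG : abelian [set: gT]) (oddG : odd #|[set: gT]|) (nt_m : m != 1).
Hypothesis fhalf : half_morph f.
Implicit Types (A B C : Klein) (x y : gT).

Local Notation mulgC := (abelian_mulgC abelG).

Definition alpha x := (f (1, x)).2.
Definition sigma A := (f (A, 1)).1.
Definition beta A x := (f (A, x)).2.

Lemma f_coset1 x : f (1, x) = (1, alpha x).
Proof.
have [y <-] := odd_sqrtg oddG x; rewrite [LHS]surjective_pairing; congr (_, _).
by rewrite -LM_mul1r; case: (fhalf (1, y) (1, y)) => ->; rewrite LM_mul_fst klein_mulgg.
Qed.

Lemma alphaM : {morph alpha : x y / x * y}.
Proof.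
move=> x y; rewrite {1}/alpha -LM_mul1r.
by case: (fhalf (1, x) (1, y)) => ->; rewrite !f_coset1 LM_mul1r //= mulgC.
Qed.

Lemma alpha_inj : injective alpha.
Proof.
move=> x y eq_xy; have : f (1, x) = f (1, y) by rewrite !f_coset1 eq_xy.
by move/perm_inj => [].
Qed.

Lemma alpha1 : alpha 1 = 1.
Proof. by apply: (mulgI (alpha 1)); rewrite -alphaM !mulg1. Qed.

Lemma alphaV : {morph alpha : x / x^-1}.
Proof. by move=> x; apply: (mulIg (alpha x)); rewrite -alphaM !mulVg alpha1. Qed.

Lemma alpha_eq1 x : (alpha x == 1) = (x == 1).
Proof. by rewrite -{1}alpha1 (inj_eq alpha_inj). Qed.

Lemma f_fst A x : (f (A, x)).1 = sigma A.
Proof.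
have -> : (A, x) = LM_mul (A, 1) (1, x) by rewrite LM_mul1r mul1g.
by case: (fhalf (A, 1) (1, x)) => ->; rewrite LM_mul_fst f_coset1 ?mulg1 ?mul1g.
Qed.

Lemma fE A x : f (A, x) = (sigma A, beta A x).
Proof. by rewrite [LHS]surjective_pairing f_fst. Qed.

Lemma sigma1 : sigma 1 = 1.
Proof. by rewrite /sigma f_coset1. Qed.

Lemma sigmaM : {morph sigma : A B / A * B}.
Proof.
move=> A B; rewrite {1}/sigma.
have -> : (A * B, 1) = LM_mul (A, 1) (B, 1) :> Klein * gT
  by rewrite LM_mulE invg1 mulg1; case: ifP.
by case: (fhalf (A, 1) (B, 1)) => ->; rewrite LM_mul_fst // kleinC.
Qed.

Lemma sigma_inj : injective sigma.
Proof.
have sigma_eq1 A : sigma A = 1 -> A = 1.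
  move=> sA1; have [g _ alphaK] := injF_bij alpha_inj.
  have : f (A, 1) = f (1, g (beta A 1)) by rewrite fE f_coset1 alphaK sA1.
  by move/perm_inj => [].
move=> A B eq_sAB; apply/eqP; rewrite -klein_mul_eq1; apply/eqP/sigma_eq1.
by rewrite sigmaM eq_sAB klein_mulgg.
Qed.

Lemma sigma_eq1 A : (sigma A == 1) = (A == 1).
Proof. by rewrite -{1}sigma1 (inj_eq sigma_inj). Qed.

Lemma beta_cases A x : A != 1 ->
  beta A x = beta A 1 * alpha x \/ beta A x = beta A 1 * (alpha x)^-1.
Proof.
move=> nt_A; have := fhalf (A, 1) (1, x).
rewrite LM_mul1r mul1g f_coset1 !fE LM_mul1r LM_mulNr ?sigma_eq1 // mul1g.
by case=> /(congr1 snd) /= ->; [left | right; rewrite mulgC].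
Qed.

Lemma beta_quot A x y : A != 1 ->
  alpha (x^-1 * y) = (beta A x)^-1 * beta A y \/
  alpha (x^-1 * y) = (beta A y)^-1 * beta A x.
Proof.
move=> nt_A; have := fhalf (A, x) (A, y).
rewrite LM_mulNr // klein_mulgg f_coset1 !fE !LM_mulNr ?sigma_eq1 //.
by case=> /(congr1 snd) /= ->; [left | right].
Qed.

(* A coset on which both shapes occur yields alpha x = (alpha x)^-1 for some
   x != 1 (beta_quot), impossible in odd order. *)
Lemma beta_uniform A : A != 1 ->
  (forall x, beta A x = beta A 1 * alpha x) \/
  (forall x, beta A x = beta A 1 * (alpha x)^-1).
Proof.
move=> nt_A; set t := beta A 1.
have [x0 /negP not_plus | all_plus] := pickP (fun x => beta A x != t * alpha x); last first.
  by left=> x; apply/eqP/negbFE/all_plus.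
have beta_x0 : beta A x0 = t * (alpha x0)^-1.
  by case: (beta_cases x0 nt_A) => // beta_x0; case: not_plus; rewrite beta_x0.
right=> y; case: (beta_cases y nt_A) => // beta_y.
case: (beta_quot x0 y nt_A); rewrite alphaM alphaV beta_x0 beta_y.
- rewrite invMg invgK -mulgA mulKg => /mulIg/(odd_invg_fix oddG) alpha_x0.
  by case: not_plus; rewrite beta_x0 alpha_x0 invg1.
- rewrite invMg -mulgA mulKg mulgC => /mulIg/esym/(odd_invg_fix oddG) alpha_y.
  by rewrite alpha_y invg1.
Qed.

(* With C = A * B, the products (A,1)(B,m) and (B,m)(A,1) are (C, m) and
   (C, m^-1); their images have M-coordinate D or D^-1, and they differ, so
   their product (beta C 1)^2 is 1. *)
Lemma beta1 C : C != 1 -> beta C 1 = 1.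
Proof.
move=> nt_C; have [A [B [nt_A nt_B defC]]] := klein_factor nt_C.
set t := beta C 1; set D := (beta A 1)^-1 * beta B m.
have DV : (beta B m)^-1 * beta A 1 = D^-1 by rewrite invMg invgK.
have beta_m : beta C m = D \/ beta C m = D^-1.
  have := fhalf (A, 1) (B, m).
  rewrite LM_mulNr // invg1 mul1g defC !fE !LM_mulNr ?sigma_eq1 // DV.
  by case=> /(congr1 snd) /= ->; [left | right].
have beta_mV : beta C m^-1 = D \/ beta C m^-1 = D^-1.
  have := fhalf (B, m) (A, 1).
  rewrite LM_mulNr // mulg1 kleinC defC !fE !LM_mulNr ?sigma_eq1 // DV.
  by case=> /(congr1 snd) /= ->; [right | left].
have alpha_mV : alpha m != (alpha m)^-1.
  by apply: contra nt_m => /eqP/esym/(odd_invg_fix oddG)/eqP; rewrite alpha_eq1.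
have [neq_m_mV beta_mmV] : beta C m != beta C m^-1 /\ beta C m * beta C m^-1 = t * t.
  case: (beta_uniform nt_C) => beta_C; rewrite (beta_C m) (beta_C m^-1) -/t alphaV;
    rewrite (inj_eq (mulgI _)) ?invgK.
    by rewrite alpha_mV [t * _^-1]mulgC mulgA mulgK.
  by rewrite eq_sym alpha_mV [t * alpha m]mulgC mulgA mulgKV.
apply: (odd_mulgg_eq1 oddG); rewrite -beta_mmV.
by case: beta_m beta_mV neq_m_mV => -> [] ->; rewrite ?mulgV ?mulVg ?eqxx.
Qed.

Lemma beta_alpha A : A != 1 ->
  (forall x, beta A x = alpha x) \/ (forall x, beta A x = (alpha x)^-1).
Proof.
move=> nt_A; have [beta_A | beta_A] := beta_uniform nt_A; [left | right] => x;
  by rewrite beta_A (beta1 nt_A) mul1g.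
Qed.

Lemma beta_sign_coherent A B : A != 1 -> B != 1 -> A != B ->
  (forall x, beta A x = alpha x) -> (forall x, beta B x = (alpha x)^-1) -> False.
Proof.
move=> nt_A nt_B neq_AB beta_A beta_B.
have nt_AB : A * B != 1 by rewrite klein_mul_eq1.
have := fhalf (A, m) (B, m).
rewrite LM_mulNr // !fE mulVg (beta1 nt_AB) !LM_mulNr ?sigma_eq1 //.
rewrite beta_A beta_B invgK => -[] /(congr1 snd) /= /esym/(odd_mulgg_eq1 oddG)/eqP.
  by rewrite invg_eq1 alpha_eq1 (negPf nt_m).
by rewrite alpha_eq1 (negPf nt_m).
Qed.

Lemma beta_sign :
  (forall A x, A != 1 -> beta A x = alpha x) \/
  (forall A x, A != 1 -> beta A x = (alpha x)^-1).
Proof.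
pose A0 := klein_of_ord ord0; have nt_A0 : A0 != 1 := klein_of_ord_neq1 ord0.
have [beta_A0 | beta_A0] := beta_alpha nt_A0; [left | right] => A x nt_A;
  have [-> // | neq_AA0] := eqVneq A A0; have [beta_A | beta_A] := beta_alpha nt_A => //.
- by case: (beta_sign_coherent nt_A0 nt_A _ beta_A0 beta_A); rewrite eq_sym.
- by case: (beta_sign_coherent nt_A nt_A0 neq_AA0 beta_A beta_A0).
Qed.

Lemma half_aut_shape : exists2 p : {perm 'I_3} * {perm gT},
  p.2 \in Aut [set: gT] & f = LM_autp p \/ f = LM_autp p * LM_twist gT.
Proof.
have [s sigmaE] := klein_autP sigma_inj sigma1.
have autGa : perm alpha_inj \in Aut [set: gT].
  rewrite inE; apply/andP; split; first by apply/subsetP => x; rewrite inE.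
  by apply/morphicP => x y _ _; rewrite !permE alphaM.
exists (s, perm alpha_inj) => //.
have [beta_E | beta_E] := beta_sign; [left | right]; apply/permP => -[A x];
  rewrite ?permM LM_autpE ?LM_twistE /= sigmaE permE fE ?sigma_eq1;
  by have [-> // | nt_A] := eqVneq A 1; rewrite beta_E.
Qed.

End HalfAutomorphism.

Section Classification.
Variable gT : finGroupType.
Hypotheses (abelG : abelian [set: gT]) (oddG : odd #|[set: gT]|) (ntG : exists m : gT, m != 1).
Implicit Types (p q : {perm 'I_3} * {perm gT}) (u v : 'Z_2 * ({perm 'I_3} * {perm gT})).

Lemma LM_Half_shape f : f \in LM_Half gT -> exists2 p,
  p.2 \in Aut [set: gT] & f = LM_autp p \/ f = LM_autp p * LM_twist gT.
Proof. by have [m nt_m] := ntG; move=> /LM_HalfP/(half_aut_shape abelG oddG nt_m). Qed.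

Lemma LM_autp_twist_notAut p : p.2 \in Aut [set: gT] -> LM_autp p * LM_twist gT \notin LM_Aut gT.
Proof.
move=> autGa; apply/negP => /LM_AutP fM; have [m nt_m] := ntG.
have := fM (klein_of_ord ord0, 1) (1, m).
rewrite LM_mul1r mul1g !permM !LM_autpE klein_aut1 (autT_morph1 autGa) !LM_twistE.
rewrite klein_aut_eq1 (negPf (klein_of_ord_neq1 _)) eqxx invg1 LM_mul1r mul1g.
move=> /(congr1 snd) /= /(odd_invg_fix oddG); rewrite -(autT_morph1 autGa) => /perm_inj/eqP.
by rewrite (negPf nt_m).
Qed.

Definition LM_Aut_param := setX [set: 'S_3] (Aut [set: gT]).

Definition LM_autp_morphism := Morphism (in2W (@LM_autpM gT) : {in LM_Aut_param &, _}).

Lemma LM_autp_injm : 'injm LM_autp_morphism.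
Proof. by apply/injmP; apply: in2W; apply: LM_autp_inj. Qed.

Lemma LM_Aut_im : LM_Aut gT = (@LM_autp gT) @: LM_Aut_param.
Proof.
apply/setP => f; apply/idP/imsetP => [autf | [[s a]]]; last first.
  by rewrite in_setX => /andP[_ autGa] ->; apply: LM_autp_Aut.
have [[s a] autGa [-> | deff]] := LM_Half_shape (subsetP (LM_Aut_sub_Half gT) f autf).
  by exists (s, a) => //; rewrite in_setX in_setT.
by move: autf; rewrite deff (negPf (LM_autp_twist_notAut autGa)).
Qed.

Definition LM_halfp u := LM_autp u.2 * LM_twist gT ^+ u.1.

Definition LM_Half_param := setX [set: 'Z_2] LM_Aut_param.

Lemma LM_halfp_morphM : {in LM_Half_param &, {morph LM_halfp : u v / u * v}}.
Proof.
move=> [i p] [j [s a]]; rewrite !in_setX => _ /and3P[_ _ autGa].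
have twist2 : LM_twist gT ^+ 2 = 1 by rewrite expgS expg1 LM_twist_sqr.
have twistC := commuteX i (@LM_twist_autpC gT (s, a) autGa).
rewrite /LM_halfp /= LM_autpM expg_mod // expgD !mulgA; congr (_ * _).
by rewrite -!mulgA twistC.
Qed.

Definition LM_halfp_morphism := Morphism LM_halfp_morphM.

Lemma LM_halfp_injm : 'injm LM_halfp_morphism.
Proof.
apply/injmP => -[i [s a]] [j [t b]]; rewrite !in_setX => /and3P[_ _ autGa] /and3P[_ _ autGb].
have neq_autp_twist p q : p.2 \in Aut [set: gT] -> q.2 \in Aut [set: gT] ->
    LM_autp p != LM_autp q * LM_twist gT.
  move=> autGp autGq; apply: contraTneq (LM_autp_Aut autGp) => ->.
  exact: LM_autp_twist_notAut.
rewrite /= /LM_halfp /=.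
case: (Z2_cases i) (Z2_cases j) => -> [] -> /=; rewrite ?expg0 ?expg1 ?mulg1.
- by move/LM_autp_inj => [-> ->].
- by move/eqP; rewrite (negPf (neq_autp_twist (s, a) (t, b) autGa autGb)).
- by move/esym/eqP; rewrite (negPf (neq_autp_twist (t, b) (s, a) autGb autGa)).
- by move/mulIg/LM_autp_inj => [-> ->].
Qed.

Lemma LM_Half_im : LM_Half gT = LM_halfp @: LM_Half_param.
Proof.
apply/setP => f; apply/idP/imsetP => [halff | [[i [s a]]]]; last first.
  rewrite !in_setX => /and3P[_ _ autGa] ->; rewrite /LM_halfp /=.
  have autp_half := subsetP (LM_Aut_sub_Half gT) _ (@LM_autp_Aut gT (s, a) autGa).
  case: (Z2_cases i) => -> /=; rewrite ?expg0 ?expg1 ?mulg1 //.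
  exact: LM_Half_mul autp_half (LM_twist_Half abelG).
have [[s a] autGa [-> | ->]] := LM_Half_shape halff.
  by exists (1, (s, a)); rewrite ?in_setX ?in_setT //= /LM_halfp expg0 mulg1.
by exists (Zp1, (s, a)); rewrite ?in_setX ?in_setT //= /LM_halfp expg1.
Qed.

End Classification.

Theorem theorem5p6 (gT : finGroupType) :
  abelian [set: gT] -> odd #|[set: gT]| -> 2 < exponent [set: gT] ->
  (LM_Aut gT \isog setX [set: 'S_3] (Aut [set: gT])) /\
  (LM_Half gT \isog setX [set: 'Z_2] (setX [set: 'S_3] (Aut [set: gT]))).
Proof.
move=> abelG oddG /ltnW/exists_nontrivial ntG; split.
  rewrite (LM_Aut_im abelG oddG ntG) -(morphimEdom (LM_autp_morphism gT)).
  exact: isog_symr (sub_isog (subxx _) (LM_autp_injm gT)).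
rewrite (LM_Half_im abelG oddG ntG) -(morphimEdom (LM_halfp_morphism gT)).
exact: isog_symr (sub_isog (subxx _) (LM_halfp_injm oddG ntG)).
Qed.
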